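(* Let $d\ge2$ and let $a_1,\ldots,a_d>1$ be real numbers with $\frac1{a_1}+\cdots+\frac1{a_d}=1$. Let $S=\operatorname{conv}(\{0,a_1e_1,\ldots,a_de_d\})\subseteq\mathbb{R}^d$. Then for $v\in\mathbb{R}^d$, the translate $S+v$ contains no integral point in its interior if and only if $v\in\mathbb{Z}^d$.
   Context: $e_1,\ldots,e_d$ are the standard unit vectors of $\mathbb{R}^d$. *)

From Stdlib Require Import Reals ZArith.
From mathcomp Require Import all_boot.
Set Implicit Arguments. Unset Strict Implicit. Unset Printing Implicit Defensive.

Open Scope R_scope.

Definition pt (d : nat) := 'I_d -> R.

Notation "\rsum_ ( i < n ) F" := (\big[Rplus/R0]_(i < n) F)
  (at level 41, F at level 41, i, n at level 50).

Definition unitvec (d : nat) (i : 'I_d) : pt d :=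
  fun j => if i == j then 1 else 0.

Definition scalev (d : nat) (c : R) (x : pt d) : pt d := fun j => c * x j.

Definition conv_hull (d n : nat) (p : 'I_n -> pt d) : pt d -> Prop :=
  fun x => exists mu : 'I_n -> R,
    (forall k, 0 <= mu k) /\ \rsum_(k < n) mu k = 1 /\
    forall j, x j = \rsum_(k < n) (mu k * p k j).

(* topological interiorRd in R^d (product/Euclidean topology, via sup-norm balls) *)
Definition interiorRd (d : nat) (A : pt d -> Prop) : pt d -> Prop :=
  fun x => exists eps, 0 < eps /\
    forall y : pt d, (forall j, Rabs (y j - x j) < eps) -> A y.

Definition translateRd (d : nat) (A : pt d -> Prop) (v : pt d) : pt d -> Prop :=
  fun x => A (fun j => x j - v j).

Definition integral_pt (d : nat) (x : pt d) : Prop :=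
  forall j, exists z : Z, x j = IZR z.

Definition simplex_vertices (d : nat) (a : 'I_d -> R) : 'I_d.+1 -> pt d :=
  fun k => match unlift ord0 k with
           | None => fun _ => 0
           | Some i => scalev (a i) (unitvec i)
           end.

Definition simplexS (d : nat) (a : 'I_d -> R) : pt d -> Prop :=
  conv_hull (simplex_vertices a).

From HB Require Import structures.
From Stdlib Require Import Reals ZArith Lra Lia Classical.
From mathcomp Require Import all_boot.
Open Scope R_scope.

(* Write t = x - v.  Since the vertices of S are 0 and the
   a_j e_j, a point z lies in S iff z >= 0 and sum_j z_j / a_j <= 1, and x
   lies in the interior of S + v iff t_j > 0 for all j and
   sum_j t_j / a_j < 1 (for positive a_j and d > 0).
   - If v is integral, every integral x gives integral t, so an interior
     point would have all t_j >= 1 and hence sum_j t_j / a_j >= sum_j 1/a_j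
     = 1, a contradiction.
   - If v is not integral, take x_j = the least integer > v_j; then
     0 < t_j <= 1 with t_j < 1 where v_j is not an integer, so
     sum_j t_j / a_j < sum_j 1/a_j = 1 and x is an interior integral point. *)

(* Real addition is a commutative monoid law, so that the generic big
   operator lemmas (bigD1, big_split, ...) apply to \rsum. *)
HB.instance Definition _ :=
  Monoid.isComLaw.Build R R0 Rplus
    (fun x y z => esym (Rplus_assoc x y z)) Rplus_comm Rplus_0_l.

Lemma rsum_le n (F G : 'I_n -> R) :
  (forall i, F i <= G i) -> \rsum_(i < n) F i <= \rsum_(i < n) G i.
Proof. by move=> FG; apply: (big_ind2 Rle) => //; [lra | move=> *; lra]. Qed.

Lemma rsum_lt n (F G : 'I_n -> R) (j : 'I_n) :
  (forall i, F i <= G i) -> F j < G j ->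
  \rsum_(i < n) F i < \rsum_(i < n) G i.
Proof.
move=> FG FGj; rewrite (bigD1 j) //= [X in _ < X](bigD1 j) //=.
apply: Rplus_lt_le_compat => //.
by apply: (big_ind2 Rle) => //; [lra | move=> *; lra].
Qed.

Lemma rsum_scale n (F : 'I_n -> R) c :
  \rsum_(i < n) (c * F i) = c * \rsum_(i < n) F i.
Proof.
by apply: (big_ind2 (fun x y => x = c * y)); [ring | move=> ????->->; ring|].
Qed.

Lemma positive_lower_bound n (F : 'I_n -> R) s :
  0 < s -> (forall i, 0 < F i) ->
  exists eps, 0 < eps /\ eps <= s /\ forall i, eps <= F i.
Proof.
elim: n F => [|n IH] F s_gt0 F_gt0.
  by exists s; split => //; split; [lra | case].
have [e [e_gt0 [e_le_s e_le]]] := IH (fun i => F (lift ord0 i)) s_gt0 (fun i => F_gt0 _).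
exists (Rmin e (F ord0)); split; first exact: Rmin_pos.
split; first exact: Rle_trans (Rmin_l _ _) e_le_s.
move=> i; case: (unliftP ord0 i) => [j ->|->]; last exact: Rmin_r.
exact: Rle_trans (Rmin_l _ _) (e_le j).
Qed.

Lemma up_sub_bounds r :
  0 < IZR (up r) - r <= 1 /\ (IZR (up r) - r = 1 -> exists z, r = IZR z).
Proof.
have [up_gt up_le] := archimed r.
split; first lra.
by move=> gap; exists (up r - 1)%Z; rewrite minus_IZR; lra.
Qed.

Section Simplex.

Variables (d : nat) (a : 'I_d -> R).
Hypothesis a_gt0 : forall i, 0 < a i.

Let inva_gt0 i : 0 < / a i.
Proof. exact/Rinv_0_lt_compat/a_gt0. Qed.

Lemma simplex_vertices_coord (mu : 'I_d.+1 -> R) j :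
  \rsum_(k < d.+1) (mu k * simplex_vertices a k j) = mu (lift ord0 j) * a j.
Proof.
rewrite big_ord_recl /simplex_vertices unlift_none.
rewrite (bigD1 j) //= liftK /scalev /unitvec eqxx big1; first ring.
by move=> i ij; rewrite liftK /scalev /unitvec (negbTE ij); ring.
Qed.

Lemma simplexS_iff z :
  simplexS a z <-> (forall j, 0 <= z j) /\ \rsum_(j < d) (z j / a j) <= 1.
Proof.
split.
- move=> [mu [mu_ge0 [mu_sum z_def]]].
  have zE j : z j = mu (lift ord0 j) * a j by rewrite z_def simplex_vertices_coord.
  split=> [j|].
    by rewrite zE; apply: Rmult_le_pos; [|apply: Rlt_le].
  have -> : \rsum_(j < d) (z j / a j) = \rsum_(j < d) mu (lift ord0 j).
    by apply: eq_bigr => j _; rewrite zE; field; apply: Rgt_not_eq.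
  by move: mu_sum; rewrite big_ord_recl; have := mu_ge0 ord0; lra.
- move=> [z_ge0 z_sum].
  (* barycentric weights: z_j / a_j on a_j e_j, the rest on the origin *)
  exists (fun k => if unlift ord0 k is Some i then z i / a i
                   else 1 - \rsum_(j < d) (z j / a j)).
  split; [|split].
  + move=> k; case: (unlift ord0 k) => [i|]; last lra.
    by apply: Rmult_le_pos; [|apply: Rlt_le].
  + rewrite big_ord_recl unlift_none.
    rewrite [X in _ + X](eq_bigr (fun i => z i / a i)); last by move=> i _; rewrite liftK.
    have cancel_sum c : 1 - c + c = 1 by ring.
    exact: cancel_sum.
  + by move=> j; rewrite simplex_vertices_coord liftK; field; apply: Rgt_not_eq.
Qed.

(* Interior points of S + v satisfy the defining inequalities strictly:
   pushing x by -eps/2, resp. +eps/2, in every coordinate stays in S + v. *)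
Lemma interior_translate_simplex (d_gt0 : (0 < d)%nat) v x :
  interiorRd (translateRd (simplexS a) v) x ->
  (forall j, 0 < x j - v j) /\ \rsum_(j < d) ((x j - v j) / a j) < 1.
Proof.
move=> [eps [eps_gt0 ball_sub]].
have shift_in c : Rabs c = eps / 2 -> Rabs c < eps by move=> ->; lra.
have lower := ball_sub (fun j => x j - eps / 2) (fun j => ltac:(apply: shift_in;
  by replace (x j - eps / 2 - x j) with (- (eps / 2)) by ring;
     rewrite Rabs_Ropp Rabs_right; lra)).
have upper := ball_sub (fun j => x j + eps / 2) (fun j => ltac:(apply: shift_in;
  by replace (x j + eps / 2 - x j) with (eps / 2) by ring; rewrite Rabs_right; lra)).
have [lower_ge0 _] := proj1 (simplexS_iff _) lower.
have [_ upper_sum] := proj1 (simplexS_iff _) upper.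
split=> [j|]; first by have := lower_ge0 j; lra.
apply: Rlt_le_trans upper_sum.
apply: (@rsum_lt _ _ _ (Ordinal d_gt0)) => [i|].
  by apply: Rmult_le_compat_r; [apply/Rlt_le/inva_gt0 | lra].
by apply: Rmult_lt_compat_r; [apply: inva_gt0 | lra].
Qed.

(* Conversely, the strict inequalities define an open set: a sup-norm ball
   of radius eps stays inside S + v when eps is below every t_j and below
   the slack of the sum constraint (recall sum_j 1/a_j = 1). *)
Lemma open_simplex_interior v x :
  \rsum_(j < d) / a j = 1 ->
  (forall j, 0 < x j - v j) -> \rsum_(j < d) ((x j - v j) / a j) < 1 ->
  interiorRd (translateRd (simplexS a) v) x.
Proof.
move=> inva_sum t_gt0 t_sum.
have [eps [eps_gt0 [eps_slack eps_le_t]]] :=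
  @positive_lower_bound d (fun j => x j - v j)
    (1 - \rsum_(j < d) ((x j - v j) / a j)) ltac:(lra) t_gt0.
exists eps; split => // y y_near; apply/simplexS_iff.
have y_bound j : 0 <= y j - v j <= x j - v j + eps.
  by have := eps_le_t j; have /Rabs_def2 := y_near j; lra.
split=> [j|]; first by case: (y_bound j).
apply: (Rle_trans _ (\rsum_(j < d) ((x j - v j) / a j + eps * / a j))).
  apply: rsum_le => j; rewrite /Rdiv -Rmult_plus_distr_r.
  by apply: Rmult_le_compat_r; [apply/Rlt_le/inva_gt0 | case: (y_bound j)].
rewrite big_split /= rsum_scale inva_sum.
have slack p q : q <= 1 - p -> p + q * 1 <= 1 by lra.
exact: slack.
Qed.

(* If v is integral, the difference of two integral points is integral, so
   an interior integral point would have all t_j >= 1, forcing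
   sum_j t_j / a_j >= sum_j 1 / a_j = 1. *)
Lemma integral_translate_no_interior_point (d_gt0 : (0 < d)%nat) v :
  \rsum_(j < d) / a j = 1 -> integral_pt v ->
  ~ exists x, integral_pt x /\ interiorRd (translateRd (simplexS a) v) x.
Proof.
move=> inva_sum v_int [x [x_int x_int_pt]].
have [t_gt0 t_sum] := @interior_translate_simplex d_gt0 v x x_int_pt.
have t_ge1 j : 1 <= x j - v j.
  have := t_gt0 j; have [zx ->] := x_int j; have [zv ->] := v_int j.
  by rewrite -minus_IZR => /lt_0_IZR ?; apply: IZR_le; lia.
suff : \rsum_(j < d) / a j <= \rsum_(j < d) ((x j - v j) / a j) by lra.
apply: rsum_le => j; rewrite /Rdiv -{1}(Rmult_1_l (/ a j)).
by apply: Rmult_le_compat_r; [apply/Rlt_le/inva_gt0 | apply: t_ge1].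
Qed.

(* If v is not integral, rounding v up coordinatewise gives an integral
   point x with 0 < t_j <= 1 for all j and t_j < 1 in some coordinate, hence
   sum_j t_j / a_j < sum_j 1 / a_j = 1. *)
Lemma nonintegral_translate_interior_point v :
  \rsum_(j < d) / a j = 1 -> ~ integral_pt v ->
  exists x, integral_pt x /\ interiorRd (translateRd (simplexS a) v) x.
Proof.
move=> inva_sum v_nonint.
have [j1 v_j1_nonint] := not_all_ex_not _ _ v_nonint.
pose x j := IZR (up (v j)).
have t_bounds j : 0 < x j - v j <= 1 by case: (up_sub_bounds (v j)).
have t_j1_lt1 : x j1 - v j1 < 1.
  have [[_ t_le1] t_eq1] := up_sub_bounds (v j1).
  by case: (Rle_lt_or_eq_dec _ _ t_le1) => // /t_eq1.
exists x; split; first by move=> j; exists (up (v j)).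
apply: open_simplex_interior => // [j|]; first by case: (t_bounds j).
rewrite -inva_sum; apply: (@rsum_lt _ _ _ j1) => [j|].
  rewrite /Rdiv -[X in _ <= X](Rmult_1_l (/ a j)).
  by apply: Rmult_le_compat_r; [apply/Rlt_le/inva_gt0 | case: (t_bounds j)].
rewrite /Rdiv -[X in _ < X](Rmult_1_l (/ a j1)).
exact: Rmult_lt_compat_r.
Qed.

End Simplex.

Theorem mainTheorem17 (d : nat) (hd : (2 <= d)%nat) (a : 'I_d -> R)
  (ha : forall i, 1 < a i) (hsum : \rsum_(i < d) / a i = 1) (v : pt d) :
  (~ exists x : pt d, integral_pt x /\ interiorRd (translateRd (simplexS a) v) x)
  <-> integral_pt v.
Proof.
have a_gt0 i : 0 < a i by have := ha i; lra.
have d_gt0 : (0 < d)%nat by apply: leq_trans hd.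
split; last exact: integral_translate_no_interior_point.
move=> no_interior_pt; apply: NNPP => v_nonint; apply: no_interior_pt.
exact: nonintegral_translate_interior_point.
Qed.
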